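(* Let $\sigma$ be a regular $k$-gon in $\mathbb{R}^2$, $k\ge 4$, with diameter $w$ satisfying $2^j\le w<2^{j+1}$ for some integer $j\ge 0$, and let $\mathcal{K}_\sigma$ be its shrunk set. Then $\sigma=\bigcup_{\sigma'\in\mathcal{K}_\sigma}\sigma'$.
   Context: The diameter of a regular $k$-gon is the diameter of its smallest enclosing disk. Shrunk set: if $w=2^j$, then $\mathcal{K}_\sigma=\{\sigma\}$. Otherwise, let $\sigma'_0$ be the concentric scaled copy of $\sigma$ of diameter $2^j$, let $c_1,\dots,c_k$ be the corners of $\sigma$, and for each $i\in[k]$ let $\sigma'_i$ be the image of $\sigma$ under the homothety with center $c_i$ and ratio $2^j/w$ (so $\sigma'_i$ is a translate of $\sigma'_0$ contained in $\sigma$ having $c_i$ as a corner); then $\mathcal{K}_\sigma=\{\sigma'_0,\sigma'_1,\dots,\sigma'_k\}$. *)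

From Stdlib Require Import Reals.
Open Scope R_scope.

Definition pt := (R * R)%type.

Fixpoint sumR (n : nat) (f : nat -> R) : R :=
  match n with
  | O => 0
  | S m => sumR m f + f m
  end.

Definition corner (k : nat) (cx cy r th : R) (i : nat) : pt :=
  (cx + r * cos (th + 2 * PI * INR i / INR k),
   cy + r * sin (th + 2 * PI * INR i / INR k)).

Definition conv_hull (k : nat) (v : nat -> pt) (p : pt) : Prop :=
  exists l : nat -> R,
    (forall i, (i < k)%nat -> 0 <= l i) /\
    sumR k l = 1 /\
    fst p = sumR k (fun i => l i * fst (v i)) /\
    snd p = sumR k (fun i => l i * snd (v i)).

Definition regular_polygon (k : nat) (cx cy r th : R) : pt -> Prop :=
  conv_hull k (corner k cx cy r th).

Definition in_disk (c : pt) (rho : R) (p : pt) : Prop :=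
  0 <= rho /\
  (fst p - fst c) ^ 2 + (snd p - snd c) ^ 2 <= rho ^ 2.

Definition enclosing_diameter (S : pt -> Prop) (w : R) : Prop :=
  0 <= w /\
  (exists c, forall p, S p -> in_disk c (w / 2) p) /\
  (forall c rho, (forall p, S p -> in_disk c rho p) -> w <= 2 * rho).

Definition homothety (a : pt) (t : R) (S : pt -> Prop) : pt -> Prop :=
  fun p => exists q, S q /\
    p = (fst a + t * (fst q - fst a), snd a + t * (snd q - snd a)).

Definition shrunk_set (k : nat) (cx cy r th w : R) (j : nat)
    (tau : pt -> Prop) : Prop :=
  let sigma := regular_polygon k cx cy r th in
  (w = 2 ^ j /\ tau = sigma) \/
  (w <> 2 ^ j /\
    (tau = homothety (cx, cy) (2 ^ j / w) sigma \/
     exists i, (i < k)%nat /\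
       tau = homothety (corner k cx cy r th i) (2 ^ j / w) sigma)).

From Stdlib Require Import Reals Lra Lia.
Open Scope R_scope.

(* Write [u_m] for the unit vector from the centre [c] towards corner [m] (so
   corner [m] is [c + r u_m]) and [C = cos (2 PI / k)].  Every vector [e] lies in
   a cone [e = be u_i + ga u_j] spanned by two adjacent corners, with
   [0 <= ga <= be]; when [c + r e] is in the polygon, the support inequality
   [u_m . (u_i + u_j) <= 1 + C] of the edge [u_i u_j] forces [be + ga <= 1].
   Let [t = 2^j / w], so [1/2 <= t <= 1].  If [be + ga <= t] the point lies in
   the central copy, and if [be >= 1 - t] in the copy at corner [i].  Otherwise
   it still lies in the copy at corner [i]: its preimage under that homothety is
   in the triangle with vertices [c], [c + r u_j] and [c + r (u_j - u_i) / 2],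
   the last one lying in the inscribed disk. *)

Lemma sumR_ext n f g : (forall m, (m < n)%nat -> f m = g m) -> sumR n f = sumR n g.
Proof.
  induction n as [|n IHn]; intros Hfg; simpl; [reflexivity|].
  rewrite IHn by (intros m Hm; apply Hfg; lia).
  rewrite Hfg by lia. reflexivity.
Qed.

Lemma sumR_le n f g : (forall m, (m < n)%nat -> f m <= g m) -> sumR n f <= sumR n g.
Proof.
  induction n as [|n IHn]; intros Hfg; simpl; [lra|].
  apply Rplus_le_compat; [apply IHn; intros m Hm|]; apply Hfg; lia.
Qed.

Lemma sumR_add n f g : sumR n (fun m => f m + g m) = sumR n f + sumR n g.
Proof. induction n as [|n IHn]; simpl; [|rewrite IHn]; ring. Qed.

Lemma sumR_scale n a f : sumR n (fun m => a * f m) = a * sumR n f.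
Proof. induction n as [|n IHn]; simpl; [|rewrite IHn]; ring. Qed.

Lemma sumR_const n a : sumR n (fun _ => a) = a * INR n.
Proof.
  induction n as [|n IHn]; [simpl; ring|].
  rewrite S_INR. simpl sumR. rewrite IHn. ring.
Qed.

Lemma sumR_shift n f : sumR n (fun m => f (S m)) = sumR n f - f O + f n.
Proof. induction n as [|n IHn]; simpl; [|rewrite IHn]; ring. Qed.

Lemma sumR_indicator n i f : (i < n)%nat ->
  sumR n (fun m => (if Nat.eqb m i then 1 else 0) * f m) = f i.
Proof.
  induction n as [|n IHn]; intros Hi; [lia|]. simpl.
  destruct (Nat.eqb_spec n i) as [->|Hni].
  - rewrite (sumR_ext _ _ (fun _ => 0)), sumR_const; [ring|].
    intros m Hm. destruct (Nat.eqb_spec m i); [lia|ring].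
  - rewrite IHn by lia. ring.
Qed.

Lemma exists_max_index (f : nat -> R) n : (0 < n)%nat ->
  exists i, (i < n)%nat /\ forall m, (m < n)%nat -> f m <= f i.
Proof.
  induction n as [|n IHn]; intros Hn; [lia|].
  destruct (Nat.eq_dec n 0) as [->|Hn0].
  - exists 0%nat. split; [lia|]. intros m Hm. replace m with 0%nat by lia. lra.
  - destruct IHn as [i [Hi Hmax]]; [lia|].
    destruct (Rle_dec (f n) (f i)).
    + exists i. split; [lia|]. intros m Hm.
      destruct (Nat.eq_dec m n) as [->|]; [lra|]. apply Hmax; lia.
    + exists n. split; [lia|]. intros m Hm.
      destruct (Nat.eq_dec m n) as [->|]; [lra|]. specialize (Hmax m ltac:(lia)). lra.
Qed.

Lemma conv_hull_vertex k v i : (i < k)%nat -> conv_hull k v (v i).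
Proof.
  intros Hi. exists (fun m => if Nat.eqb m i then 1 else 0). repeat split.
  - intros m _. destruct (Nat.eqb m i); lra.
  - transitivity (sumR k (fun m => (if Nat.eqb m i then 1 else 0) * 1)).
    + apply sumR_ext. intros m _. ring.
    + apply sumR_indicator. exact Hi.
  - rewrite sumR_indicator; auto.
  - rewrite sumR_indicator; auto.
Qed.

Lemma conv_hull_comb3 k v (p1 p2 p3 q : pt) a b c :
  conv_hull k v p1 -> conv_hull k v p2 -> conv_hull k v p3 ->
  0 <= a -> 0 <= b -> 0 <= c -> a + b + c = 1 ->
  fst q = a * fst p1 + b * fst p2 + c * fst p3 ->
  snd q = a * snd p1 + b * snd p2 + c * snd p3 -> conv_hull k v q.
Proof.
  intros (l1 & P1 & S1 & X1 & Y1) (l2 & P2 & S2 & X2 & Y2) (l3 & P3 & S3 & X3 & Y3)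
    Ha Hb Hc Habc Hx Hy.
  exists (fun m => a * l1 m + b * l2 m + c * l3 m). repeat split.
  - intros m Hm. specialize (P1 m Hm). specialize (P2 m Hm). specialize (P3 m Hm). nra.
  - rewrite !sumR_add, !sumR_scale, S1, S2, S3. lra.
  - rewrite (sumR_ext _ _ (fun m => a * (l1 m * fst (v m)) + b * (l2 m * fst (v m))
                                   + c * (l3 m * fst (v m)))) by (intros; ring).
    rewrite !sumR_add, !sumR_scale, <- X1, <- X2, <- X3. exact Hx.
  - rewrite (sumR_ext _ _ (fun m => a * (l1 m * snd (v m)) + b * (l2 m * snd (v m))
                                   + c * (l3 m * snd (v m)))) by (intros; ring).
    rewrite !sumR_add, !sumR_scale, <- Y1, <- Y2, <- Y3. exact Hy.
Qed.

Lemma conv_hull_homothety k v (a p : pt) t : 0 <= t <= 1 ->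
  conv_hull k v a -> homothety a t (conv_hull k v) p -> conv_hull k v p.
Proof.
  intros Ht Ha (q & Hq & ->).
  apply (conv_hull_comb3 _ _ a q a _ (1 - t) t 0); auto; simpl; lra.
Qed.

Lemma homothety_of_preimage (a p : pt) t (S : pt -> Prop) : t <> 0 ->
  S (fst a + (fst p - fst a) / t, snd a + (snd p - snd a) / t) -> homothety a t S p.
Proof.
  intros Ht HS. eexists. split; [exact HS|].
  destruct a, p. simpl. f_equal; field; exact Ht.
Qed.

(* [(2 C a1 - c1, 2 C a2 - c2)] is the reflection of the unit vector [c] across
   the unit vector [a]. *)
Lemma cone_decomposition a1 a2 c1 c2 e1 e2 C :
  a1 * a1 + a2 * a2 = 1 -> c1 * c1 + c2 * c2 = 1 -> a1 * c1 + a2 * c2 = C -> 0 <= C < 1 ->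
  e1 * c1 + e2 * c2 <= e1 * a1 + e2 * a2 ->
  e1 * (2 * C * a1 - c1) + e2 * (2 * C * a2 - c2) <= e1 * c1 + e2 * c2 ->
  exists be ga, 0 <= ga <= be /\ e1 = be * a1 + ga * c1 /\ e2 = be * a2 + ga * c2.
Proof.
  intros Ha Hc Hac HC Hca Hrc.
  set (det := a1 * c2 - a2 * c1).
  assert (Hdet : det * det = 1 - C * C).
  { transitivity ((a1 * a1 + a2 * a2) * (c1 * c1 + c2 * c2) - (a1 * c1 + a2 * c2) ^ 2).
    - unfold det. ring.
    - rewrite Ha, Hc, Hac. ring. }
  assert (Hdet0 : det <> 0) by (intro H0; rewrite H0 in Hdet; nra).
  exists ((e1 * c2 - e2 * c1) / det), ((a1 * e2 - a2 * e1) / det).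
  set (be := (e1 * c2 - e2 * c1) / det). set (ga := (a1 * e2 - a2 * e1) / det).
  assert (E1 : e1 = be * a1 + ga * c1) by (unfold be, ga, det in *; field; exact Hdet0).
  assert (E2 : e2 = be * a2 + ga * c2) by (unfold be, ga, det in *; field; exact Hdet0).
  clearbody be ga.
  assert (Dc : e1 * c1 + e2 * c2 = be * C + ga).
  { transitivity (be * (a1 * c1 + a2 * c2) + ga * (c1 * c1 + c2 * c2)).
    - rewrite E1, E2. ring.
    - rewrite Hac, Hc. ring. }
  assert (Da : e1 * a1 + e2 * a2 = be + ga * C).
  { transitivity (be * (a1 * a1 + a2 * a2) + ga * (a1 * c1 + a2 * c2)).
    - rewrite E1, E2. ring.
    - rewrite Hac, Ha. ring. }
  assert (Dr : e1 * (2 * C * a1 - c1) + e2 * (2 * C * a2 - c2)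
               = 2 * C * (e1 * a1 + e2 * a2) - (e1 * c1 + e2 * c2)) by ring.
  rewrite Dr, Da, Dc in Hrc. rewrite Da, Dc in Hca.
  assert (Hga : 0 <= ga) by (apply (Rmult_le_reg_r (1 - C * C)); nra).
  assert (Hbe : 0 <= be - ga) by (apply (Rmult_le_reg_r (1 - C)); nra).
  repeat split; auto; lra.
Qed.

Section RegularPolygon.

Variables (k : nat) (th : R).
Hypothesis k_ge4 : (4 <= k)%nat.

Definition alpha : R := 2 * PI / INR k.
Definition dir_x (x : R) : R := cos (th + alpha * x).
Definition dir_y (x : R) : R := sin (th + alpha * x).
Definition dir_dot (x y : R) : R := dir_x x * dir_x y + dir_y x * dir_y y.

Lemma INR_k_ge4 : 4 <= INR k.
Proof. pose proof (le_INR 4 k k_ge4) as H. simpl in H. lra. Qed.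

Lemma alpha_mul_k : alpha * INR k = 2 * PI.
Proof. pose proof INR_k_ge4. unfold alpha. field. lra. Qed.

Lemma alpha_bounds : 0 < alpha <= PI / 2.
Proof.
  pose proof INR_k_ge4. pose proof PI_RGT_0. pose proof alpha_mul_k.
  split; nra.
Qed.

Lemma cos_alpha_bounds : 0 <= cos alpha < 1.
Proof.
  destruct alpha_bounds. pose proof PI_RGT_0. split.
  - apply cos_ge_0; lra.
  - rewrite <- cos_0. apply cos_decreasing_1; lra.
Qed.

Lemma cos_half_alpha_pos : 0 < cos (alpha / 2).
Proof. destruct alpha_bounds. apply cos_gt_0; lra. Qed.

Lemma corner_dir cx cy r i :
  corner k cx cy r th i = (cx + r * dir_x (INR i), cy + r * dir_y (INR i)).
Proof.
  pose proof INR_k_ge4. unfold corner, dir_x, dir_y, alpha.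
  replace (2 * PI * INR i / INR k) with (2 * PI / INR k * INR i) by (field; lra).
  reflexivity.
Qed.

Lemma dir_dot_cos x y : dir_dot x y = cos (alpha * (x - y)).
Proof.
  unfold dir_dot, dir_x, dir_y. rewrite <- cos_minus. f_equal. ring.
Qed.

Lemma dir_dot_self x : dir_dot x x = 1.
Proof. rewrite dir_dot_cos, Rminus_diag, Rmult_0_r. apply cos_0. Qed.

Lemma dir_x_rec x : dir_x (x + 1) + dir_x (x - 1) = 2 * cos alpha * dir_x x.
Proof.
  unfold dir_x.
  replace (th + alpha * (x + 1)) with (th + alpha * x + alpha) by ring.
  replace (th + alpha * (x - 1)) with (th + alpha * x - alpha) by ring.
  rewrite cos_plus, cos_minus. ring.
Qed.

Lemma dir_y_rec x : dir_y (x + 1) + dir_y (x - 1) = 2 * cos alpha * dir_y x.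
Proof.
  unfold dir_y.
  replace (th + alpha * (x + 1)) with (th + alpha * x + alpha) by ring.
  replace (th + alpha * (x - 1)) with (th + alpha * x - alpha) by ring.
  rewrite sin_plus, sin_minus. ring.
Qed.

Lemma dir_reflect x s : (s = 1 \/ s = -1) ->
  dir_x (x - s) = 2 * cos alpha * dir_x x - dir_x (x + s) /\
  dir_y (x - s) = 2 * cos alpha * dir_y x - dir_y (x + s).
Proof.
  pose proof (dir_x_rec x). pose proof (dir_y_rec x).
  intros [-> | ->]; [|replace (x - -1) with (x + 1) by ring;
                      replace (x + -1) with (x - 1) by ring]; split; lra.
Qed.

Lemma dir_x_periodic x : dir_x (x + INR k) = dir_x x.
Proof.
  unfold dir_x. rewrite Rmult_plus_distr_l, alpha_mul_k.
  replace (th + (alpha * x + 2 * PI)) with (th + alpha * x + 2 * INR 1 * PI) by (simpl; ring).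
  apply cos_period.
Qed.

Lemma dir_y_periodic x : dir_y (x + INR k) = dir_y x.
Proof.
  unfold dir_y. rewrite Rmult_plus_distr_l, alpha_mul_k.
  replace (th + (alpha * x + 2 * PI)) with (th + alpha * x + 2 * INR 1 * PI) by (simpl; ring).
  apply sin_period.
Qed.

(* Shifting the index by +1 or -1 permutes the corners, while the three-term
   recurrence multiplies the sum of both shifts by [2 cos alpha <> 2]. *)
Lemma sum_corners_zero (g : R -> R) :
  (forall x, g (x + 1) + g (x - 1) = 2 * cos alpha * g x) ->
  (forall x, g (x + INR k) = g x) ->
  sumR k (fun m => g (INR m)) = 0.
Proof.
  intros Hrec Hper. destruct cos_alpha_bounds as [_ HC].
  assert (Hnext : sumR k (fun m => g (INR m + 1)) = sumR k (fun m => g (INR m))).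
  { rewrite (sumR_ext _ _ (fun m => g (INR (S m)))) by (intros; rewrite S_INR; reflexivity).
    rewrite (sumR_shift k (fun m => g (INR m))).
    rewrite <- (Hper (INR 0)), Rplus_0_l. ring. }
  assert (Hprev : sumR k (fun m => g (INR m - 1)) = sumR k (fun m => g (INR m))).
  { pose proof (sumR_shift k (fun m => g (INR m - 1))) as E.
    rewrite (sumR_ext _ (fun m => g (INR (S m) - 1)) (fun m => g (INR m))) in E
      by (intros; rewrite S_INR; f_equal; ring).
    rewrite <- (Hper (INR 0 - 1)) in E.
    replace (INR 0 - 1 + INR k) with (INR k - 1) in E by (simpl; ring). lra. }
  assert (Hsum : sumR k (fun m => g (INR m + 1) + g (INR m - 1))
                 = 2 * cos alpha * sumR k (fun m => g (INR m))).
  { rewrite <- sumR_scale. apply sumR_ext. intros. apply Hrec. }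
  rewrite sumR_add, Hnext, Hprev in Hsum. nra.
Qed.

Lemma cos_half_step_le D : (D < k)%nat -> cos (alpha * (INR D + / 2)) <= cos (alpha / 2).
Proof.
  intros HD. destruct alpha_bounds. pose proof PI_RGT_0. pose proof alpha_mul_k.
  assert (HDk : INR D + 1 <= INR k) by (rewrite <- S_INR; apply le_INR; lia).
  pose proof (pos_INR D).
  set (z := alpha * (INR D + / 2)).
  assert (Hz : alpha / 2 <= z <= 2 * PI - alpha / 2) by (unfold z; split; nra).
  destruct (Rle_dec z PI).
  - apply cos_decr_1; lra.
  - replace (cos (alpha / 2)) with (cos (2 * PI - alpha / 2))
      by (rewrite cos_minus, cos_2PI, sin_2PI; ring).
    apply cos_incr_1; lra.
Qed.

Lemma edge_cos_sum_le D x : (D < k)%nat -> (x = INR D + 1 \/ x = - INR D) ->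
  cos (alpha * x) + cos (alpha * (x - 1)) <= 1 + cos alpha.
Proof.
  intros HD Hx.
  assert (Hhalf : cos (alpha * (x - / 2)) <= cos (alpha / 2)).
  { destruct Hx as [-> | ->].
    - replace (INR D + 1 - / 2) with (INR D + / 2) by field.
      apply cos_half_step_le; exact HD.
    - replace (alpha * (- INR D - / 2)) with (- (alpha * (INR D + / 2))) by ring.
      rewrite cos_neg. apply cos_half_step_le; exact HD. }
  rewrite form1.
  replace ((alpha * x - alpha * (x - 1)) / 2) with (alpha / 2) by field.
  replace ((alpha * x + alpha * (x - 1)) / 2) with (alpha * (x - / 2)) by field.
  replace (cos alpha) with (2 * cos (alpha / 2) * cos (alpha / 2) - 1)
    by (rewrite <- cos_2a_cos; f_equal; field).
  pose proof cos_half_alpha_pos. nra.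
Qed.

Lemma corner_edge_support m i s : (m < k)%nat -> (i < k)%nat -> (s = 1 \/ s = -1) ->
  dir_dot (INR m) (INR i) + dir_dot (INR m) (INR i + s) <= 1 + cos alpha.
Proof.
  intros Hm Hi Hs. rewrite !dir_dot_cos.
  destruct Hs as [-> | ->].
  - replace (INR m - (INR i + 1)) with (INR m - INR i - 1) by ring.
    destruct (Nat.le_gt_cases m i).
    + apply (edge_cos_sum_le (i - m)); [lia|]. right. rewrite minus_INR by lia. ring.
    + apply (edge_cos_sum_le (m - i - 1)); [lia|]. left.
      rewrite !minus_INR by lia. simpl. ring.
  - replace (INR m - (INR i + -1)) with (INR m - INR i + 1) by ring.
    replace (INR m - INR i) with (INR m - INR i + 1 - 1) at 1 by ring.
    rewrite Rplus_comm.
    destruct (Nat.le_gt_cases i m).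
    + apply (edge_cos_sum_le (m - i)); [lia|]. left. rewrite minus_INR by lia. ring.
    + apply (edge_cos_sum_le (i - m - 1)); [lia|]. right.
      rewrite !minus_INR by lia. simpl. ring.
Qed.

Lemma corner_neighbor i s : (i < k)%nat -> (s = 1 \/ s = -1) ->
  exists j, (j < k)%nat /\ dir_x (INR j) = dir_x (INR i + s) /\ dir_y (INR j) = dir_y (INR i + s).
Proof.
  intros Hi [-> | ->].
  - destruct (Nat.eq_dec (S i) k) as [Ek|Ek].
    + exists 0%nat. split; [lia|].
      replace (INR i + 1) with (INR 0 + INR k) by (rewrite <- Ek, S_INR; simpl; ring).
      rewrite dir_x_periodic, dir_y_periodic. split; reflexivity.
    + exists (S i). split; [lia|]. rewrite S_INR. split; reflexivity.
  - destruct i as [|i].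
    + exists (k - 1)%nat. split; [lia|].
      replace (INR (k - 1)) with (INR 0 + -1 + INR k) by (rewrite minus_INR by lia; simpl; ring).
      rewrite dir_x_periodic, dir_y_periodic. split; reflexivity.
    + exists i. split; [lia|]. rewrite S_INR.
      replace (INR i + 1 + -1) with (INR i) by ring. split; reflexivity.
Qed.

Definition adjacent_corners (i j : nat) : Prop :=
  (i < k)%nat /\ (j < k)%nat /\ dir_dot (INR i) (INR j) = cos alpha /\
  forall m, (m < k)%nat -> dir_dot (INR m) (INR i) + dir_dot (INR m) (INR j) <= 1 + cos alpha.

Lemma exists_adjacent_corner i s : (i < k)%nat -> (s = 1 \/ s = -1) ->
  exists j, adjacent_corners i j /\
    dir_x (INR j) = dir_x (INR i + s) /\ dir_y (INR j) = dir_y (INR i + s).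
Proof.
  intros Hi Hs. destruct (corner_neighbor i s Hi Hs) as (j & Hj & Ex & Ey).
  assert (Edot : forall y, dir_dot y (INR j) = dir_dot y (INR i + s))
    by (intros; unfold dir_dot; rewrite Ex, Ey; reflexivity).
  exists j. repeat split; auto.
  - rewrite Edot, dir_dot_cos.
    destruct Hs as [-> | ->]; [rewrite <- cos_neg|]; f_equal; ring.
  - intros m Hm. rewrite Edot. apply corner_edge_support; auto.
Qed.

(* The corner [i] maximising [e . u_i] and its neighbour on the side where [e]
   leans span a cone containing [e]. *)
Lemma sector_decomposition e1 e2 : exists i j be ga,
  adjacent_corners i j /\ 0 <= ga <= be /\
  e1 = be * dir_x (INR i) + ga * dir_x (INR j) /\
  e2 = be * dir_y (INR i) + ga * dir_y (INR j).
Proof.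
  set (f x := e1 * dir_x x + e2 * dir_y x).
  destruct (exists_max_index (fun m => f (INR m)) k) as (i & Hi & Hmax); [lia|].
  assert (Hside : exists s, (s = 1 \/ s = -1) /\ f (INR i - s) <= f (INR i + s)).
  { destruct (Rle_dec (f (INR i - 1)) (f (INR i + 1))).
    - exists 1. auto.
    - exists (-1). split; [auto|].
      replace (INR i - -1) with (INR i + 1) by ring.
      replace (INR i + -1) with (INR i - 1) by ring. lra. }
  destruct Hside as (s & Hs & Hle).
  destruct (exists_adjacent_corner i s Hi Hs) as (j & Hadj & Ex & Ey).
  destruct (dir_reflect (INR i) s Hs) as [Rx Ry].
  destruct (cone_decomposition (dir_x (INR i)) (dir_y (INR i)) (dir_x (INR j)) (dir_y (INR j))
              e1 e2 (cos alpha)) as (be & ga & Hbg & E1 & E2).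
  - apply dir_dot_self.
  - apply dir_dot_self.
  - apply Hadj.
  - apply cos_alpha_bounds.
  - apply Hmax. apply Hadj.
  - unfold f in Hle. rewrite Rx, Ry, <- Ex, <- Ey in Hle. lra.
  - exists i, j, be, ga. auto.
Qed.


Variables (cx cy r : R).
Local Notation polygon := (regular_polygon k cx cy r th).

Lemma polygon_center : polygon (cx, cy).
Proof.
  pose proof INR_k_ge4.
  assert (Zx := sum_corners_zero dir_x dir_x_rec dir_x_periodic).
  assert (Zy := sum_corners_zero dir_y dir_y_rec dir_y_periodic).
  exists (fun _ => / INR k). repeat split.
  - intros. left. apply Rinv_0_lt_compat. lra.
  - rewrite sumR_const. field. lra.
  - rewrite (sumR_ext _ _ (fun m => cx / INR k + r / INR k * dir_x (INR m)))
      by (intros; rewrite corner_dir; simpl; field; lra).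
    rewrite sumR_add, sumR_const, sumR_scale, Zx. simpl. field. lra.
  - rewrite (sumR_ext _ _ (fun m => cy / INR k + r / INR k * dir_y (INR m)))
      by (intros; rewrite corner_dir; simpl; field; lra).
    rewrite sumR_add, sumR_const, sumR_scale, Zy. simpl. field. lra.
Qed.

Lemma polygon_corner i : (i < k)%nat -> polygon (cx + r * dir_x (INR i), cy + r * dir_y (INR i)).
Proof. intros Hi. rewrite <- corner_dir. apply conv_hull_vertex. exact Hi. Qed.

Lemma polygon_dir_weights (p : pt) : polygon p -> exists l : nat -> R,
  (forall m, (m < k)%nat -> 0 <= l m) /\ sumR k l = 1 /\
  fst p = cx + r * sumR k (fun m => l m * dir_x (INR m)) /\
  snd p = cy + r * sumR k (fun m => l m * dir_y (INR m)).
Proof.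
  intros (l & Hl & Hs & X & Y). exists l. repeat split; auto.
  - rewrite X, (sumR_ext _ _ (fun m => cx * l m + r * (l m * dir_x (INR m))))
      by (intros; rewrite corner_dir; simpl; ring).
    rewrite sumR_add, !sumR_scale, Hs. ring.
  - rewrite Y, (sumR_ext _ _ (fun m => cy * l m + r * (l m * dir_y (INR m))))
      by (intros; rewrite corner_dir; simpl; ring).
    rewrite sumR_add, !sumR_scale, Hs. ring.
Qed.

Lemma polygon_cone (q : pt) i j s x y : (i < k)%nat -> (j < k)%nat ->
  0 < s -> 0 <= x -> 0 <= y -> x + y <= s ->
  fst q = cx + r * (x * dir_x (INR i) + y * dir_x (INR j)) / s ->
  snd q = cy + r * (x * dir_y (INR i) + y * dir_y (INR j)) / s ->
  polygon q.
Proof.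
  intros Hi Hj Hs Hx Hy Hxy Eq1 Eq2.
  apply (conv_hull_comb3 _ _ _ _ _ _ ((s - x - y) / s) (x / s) (y / s)
           polygon_center (polygon_corner i Hi) (polygon_corner j Hj));
    try (apply Rle_mult_inv_pos; lra); [field; lra | rewrite Eq1 | rewrite Eq2];
    simpl; field; lra.
Qed.

(* [(1 + cos alpha) / 2 = cos (alpha / 2) ^ 2] is the squared inradius. *)
Lemma polygon_inscribed_disk e1 e2 : e1 * e1 + e2 * e2 <= (1 + cos alpha) / 2 ->
  polygon (cx + r * e1, cy + r * e2).
Proof.
  intros He. pose proof cos_alpha_bounds.
  destruct (sector_decomposition e1 e2) as (i & j & be & ga & (Hi & Hj & Hij & _) & Hbg & E1 & E2).
  assert (Hn : e1 * e1 + e2 * e2 = be * be * dir_dot (INR i) (INR i)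
                 + ga * ga * dir_dot (INR j) (INR j) + 2 * be * ga * dir_dot (INR i) (INR j))
    by (rewrite E1, E2; unfold dir_dot; ring).
  rewrite !dir_dot_self, Hij in Hn.
  assert (Hsq : (be + ga) * (be + ga) * (1 + cos alpha) <= 1 * (1 + cos alpha)).
  { replace ((be + ga) * (be + ga) * (1 + cos alpha))
      with (2 * (e1 * e1 + e2 * e2) - (1 - cos alpha) * ((be - ga) * (be - ga)))
      by (rewrite Hn; ring).
    assert (0 <= (1 - cos alpha) * ((be - ga) * (be - ga))) by (apply Rmult_le_pos; nra).
    lra. }
  apply Rmult_le_reg_r in Hsq; [|lra].
  apply (polygon_cone _ i j 1 be ga); auto; try nra; simpl; [rewrite E1 | rewrite E2]; field.
Qed.

(* [(u_j - u_i) / 2] has norm [sin (alpha / 2) <= cos (alpha / 2)], the inradius,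
   because [alpha <= PI / 2]: this is where [4 <= k] is needed. *)
Lemma polygon_half_edge (q : pt) i j s x y : adjacent_corners i j ->
  0 < s -> 0 <= x <= y -> x + y <= s ->
  fst q = cx + r * (y * dir_x (INR j) - x * dir_x (INR i)) / s ->
  snd q = cy + r * (y * dir_y (INR j) - x * dir_y (INR i)) / s ->
  polygon q.
Proof.
  intros (Hi & Hj & Hij & _) Hs Hx Hxy Eq1 Eq2. pose proof cos_alpha_bounds.
  assert (Hmid : polygon (cx + r * ((dir_x (INR j) - dir_x (INR i)) / 2),
                          cy + r * ((dir_y (INR j) - dir_y (INR i)) / 2))).
  { apply polygon_inscribed_disk.
    replace ((dir_x (INR j) - dir_x (INR i)) / 2 * ((dir_x (INR j) - dir_x (INR i)) / 2)
             + (dir_y (INR j) - dir_y (INR i)) / 2 * ((dir_y (INR j) - dir_y (INR i)) / 2))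
      with ((dir_dot (INR i) (INR i) + dir_dot (INR j) (INR j) - 2 * dir_dot (INR i) (INR j)) / 4)
      by (unfold dir_dot; field).
    rewrite !dir_dot_self, Hij. lra. }
  apply (conv_hull_comb3 _ _ _ _ _ _ ((s - x - y) / s) (2 * x / s) ((y - x) / s)
           polygon_center Hmid (polygon_corner j Hj));
    try (apply Rle_mult_inv_pos; lra); [field; lra | rewrite Eq1 | rewrite Eq2];
    simpl; field; lra.
Qed.

(* Pairing the barycentric weights of [p] with the support inequality of the
   edge [u_i u_j]. *)
Lemma cone_weights_le1 (p : pt) i j be ga : 0 < r -> adjacent_corners i j -> polygon p ->
  fst p = cx + r * (be * dir_x (INR i) + ga * dir_x (INR j)) ->
  snd p = cy + r * (be * dir_y (INR i) + ga * dir_y (INR j)) ->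
  be + ga <= 1.
Proof.
  intros Hr (Hi & Hj & Hij & Hsupp) Hp E1 E2. pose proof cos_alpha_bounds.
  destruct (polygon_dir_weights p Hp) as (l & Hl & Hs & X & Y).
  assert (Dx : sumR k (fun m => l m * dir_x (INR m)) = be * dir_x (INR i) + ga * dir_x (INR j))
    by (apply (Rmult_eq_reg_l r); lra).
  assert (Dy : sumR k (fun m => l m * dir_y (INR m)) = be * dir_y (INR i) + ga * dir_y (INR j))
    by (apply (Rmult_eq_reg_l r); lra).
  assert (Hlin : (be + ga) * (1 + cos alpha)
     = sumR k (fun m => l m * (dir_dot (INR m) (INR i) + dir_dot (INR m) (INR j)))).
  { rewrite (sumR_ext _ _ (fun m => (dir_x (INR i) + dir_x (INR j)) * (l m * dir_x (INR m))
                               + (dir_y (INR i) + dir_y (INR j)) * (l m * dir_y (INR m))))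
      by (intros; unfold dir_dot; ring).
    rewrite sumR_add, !sumR_scale, Dx, Dy.
    transitivity (be * (dir_dot (INR i) (INR i) + dir_dot (INR i) (INR j))
                  + ga * (dir_dot (INR i) (INR j) + dir_dot (INR j) (INR j))).
    - rewrite !dir_dot_self, Hij. ring.
    - unfold dir_dot. ring. }
  assert (Hbound : (be + ga) * (1 + cos alpha) <= 1 * (1 + cos alpha)).
  { rewrite Hlin. transitivity (sumR k (fun m => (1 + cos alpha) * l m)).
    - apply sumR_le. intros m Hm. specialize (Hsupp m Hm). specialize (Hl m Hm). nra.
    - rewrite sumR_scale, Hs. lra. }
  apply Rmult_le_reg_r in Hbound; lra.
Qed.

Lemma shrunk_copies_cover t (p : pt) i j be ga : / 2 <= t <= 1 ->
  adjacent_corners i j -> 0 <= ga <= be -> be + ga <= 1 ->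
  fst p = cx + r * (be * dir_x (INR i) + ga * dir_x (INR j)) ->
  snd p = cy + r * (be * dir_y (INR i) + ga * dir_y (INR j)) ->
  homothety (cx, cy) t polygon p \/ homothety (corner k cx cy r th i) t polygon p.
Proof.
  intros Ht Hadj Hbg Hsum E1 E2. pose proof Hadj as (Hi & Hj & _).
  destruct (Rle_dec (be + ga) t).
  - left. apply homothety_of_preimage; [lra|].
    apply (polygon_cone _ i j t be ga); auto; try lra; simpl;
      [rewrite E1 | rewrite E2]; field; lra.
  - right. rewrite corner_dir. apply homothety_of_preimage; [lra|].
    destruct (Rle_dec (1 - t) be).
    + apply (polygon_cone _ i j t (t - 1 + be) ga); auto; try lra; simpl;
        [rewrite E1 | rewrite E2]; field; lra.
    + apply (polygon_half_edge _ i j t (1 - t - be) ga); auto; try lra; simpl;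
        [rewrite E1 | rewrite E2]; field; lra.
Qed.

Lemma polygon_covered_by_copies t (p : pt) : 0 < r -> / 2 <= t <= 1 -> polygon p ->
  homothety (cx, cy) t polygon p \/
  exists i, (i < k)%nat /\ homothety (corner k cx cy r th i) t polygon p.
Proof.
  intros Hr Ht Hp.
  destruct (sector_decomposition ((fst p - cx) / r) ((snd p - cy) / r))
    as (i & j & be & ga & Hadj & Hbg & E1 & E2).
  assert (P1 : fst p = cx + r * (be * dir_x (INR i) + ga * dir_x (INR j)))
    by (rewrite <- E1; field; lra).
  assert (P2 : snd p = cy + r * (be * dir_y (INR i) + ga * dir_y (INR j)))
    by (rewrite <- E2; field; lra).
  pose proof (cone_weights_le1 p i j be ga Hr Hadj Hp P1 P2) as Hsum.
  destruct (shrunk_copies_cover t p i j be ga Ht Hadj Hbg Hsum P1 P2) as [Hc | Hc]; auto.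
  right. exists i. split; [apply Hadj | exact Hc].
Qed.

End RegularPolygon.

Lemma dyadic_ratio_bounds (j : nat) (w : R) : 2 ^ j <= w < 2 ^ (j + 1) -> / 2 <= 2 ^ j / w <= 1.
Proof.
  intros [Hlo Hhi]. rewrite pow_add in Hhi. simpl in Hhi.
  assert (H2j : 0 < 2 ^ j) by (apply pow_lt; lra).
  split; apply (Rmult_le_reg_r w); try lra; unfold Rdiv;
    rewrite Rmult_assoc, Rinv_l; lra.
Qed.

Theorem lemma9 (k j : nat) (cx cy r th w : R) :
  (4 <= k)%nat -> 0 < r ->
  enclosing_diameter (regular_polygon k cx cy r th) w ->
  2 ^ j <= w < 2 ^ (j + 1) ->
  forall p : pt,
    regular_polygon k cx cy r th p <->
    exists tau, shrunk_set k cx cy r th w j tau /\ tau p.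
Proof.
  intros Hk Hr _ Hw p. pose proof (dyadic_ratio_bounds j w Hw) as Ht.
  split.
  - intros Hp. destruct (Req_dec w (2 ^ j)) as [Ew | Ew].
    + exists (regular_polygon k cx cy r th). split; [left|]; auto.
    + destruct (polygon_covered_by_copies k th Hk cx cy r (2 ^ j / w) p Hr Ht Hp)
        as [H | (i & Hi & H)]; eexists; split; try exact H; right; split; auto.
      right. exists i. auto.
  - intros (tau & [[_ ->] | [_ [-> | (i & Hi & ->)]]] & Hp); auto;
      (eapply conv_hull_homothety; [| | exact Hp]; [lra |]).
    + apply polygon_center; exact Hk.
    + apply conv_hull_vertex; exact Hi.
Qed.
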